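(* Let $X$ be a Tychonoff space. Then: (i) the games $G_1(\mathscr N[K(X)],\neg\Omega_X)$, $G_1(\mathscr N_{C_k(X)}(\mathbf 0),\neg\Omega_{C_p(X),\mathbf 0})$ and $G_1(\mathscr T_{C_k(X)},\mathrm{CD}_{C_p(X)})$ are equivalent; (ii) the games $G_1(\mathcal K_X,\Omega_X)$, $G_1(\Omega_{C_k(X),\mathbf 0},\Omega_{C_p(X),\mathbf 0})$ and $G_1(\mathcal D_{C_k(X)},\Omega_{C_p(X),\mathbf 0})$ are equivalent; (iii) each game in (i) is dual to each game in (ii); (iv) $\mathrm{I}\underset{\mathrm{pre}}{\uparrow}G_1(\mathscr T_{C_k(X)},\mathrm{CD}_{C_p(X)})$ iff $X$ is $\sigma$-compact iff $\mathrm{cof}(\mathscr N_{C_k(X)}(\mathbf 0);\mathscr N_{C_p(X)}(\mathbf 0),\supseteq)=\omega$; (v) the games $G_1(\mathscr N[K(X)],\neg\Gamma_X)$ and $G_1(\mathscr N_{C_k(X)}(\mathbf 0),\neg\Gamma_{C_p(X),\mathbf 0})$ are equivalent for player One to $G_1(\mathscr N[K(X)],\neg\Omega_X)$ and $G_1(\mathscr N_{C_k(X)}(\mathbf 0),\neg\Omega_{C_p(X),\mathbf 0})$; (vi) $G_1(\mathcal K_X,\Omega_X)$ and $G_1(\mathcal K_X,\Gamma_X)$ are equivalent for player Two.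
   Context: $K(X)$ is the family of nonempty compact subsets of $X$. $C_p(X)$ ($C_k(X)$) is the set of continuous $f:X\to\mathbb R$ with the topology of pointwise convergence (uniform convergence on compact sets), generated by sets $[f;A,\varepsilon]=\{g:\sup_{x\in A}|f(x)-g(x)|<\varepsilon\}$ with $A$ finite (resp. compact), $\varepsilon>0$; $\mathbf 0$ is the zero function. $\Omega_X$ is the set of $\omega$-covers of $X$: open covers $\mathscr U$ with $X\notin\mathscr U$ such that every finite $F\subseteq X$ lies in some $U\in\mathscr U$. $\mathcal K_X$ is the set of $k$-covers: open covers $\mathscr U$ with $X\notin\mathscr U$ such that every compact $K\subseteq X$ lies in some member. $\Gamma_X$ is the set of $\gamma$-covers: infinite open covers $\mathscr U$ with $X\notin\mathscr U$ such that for every finite $F\subseteq X$, $\{U\in\mathscr U:F\not\subseteq U\}$ is finite. $\mathscr N[K(X)]=\{\mathscr N(K):K\in K(X)\}$ with $\mathscr N(K)$ the set of open $U\neq X$ with $K\subseteq U$. For a space $Y$ and $y\in Y$: $\mathscr N_Y(y)$ = open neighbourhoods of $y$; $\mathscr T_Y$ = nonempty open sets; $\mathcal D_Y$ = dense sets; $\mathrm{CD}_Y$ = closed discrete sets; $\Omega_{Y,y}=\{S\subseteq Y:y\in\mathrm{cl}(S)\}$; $\Gamma_{Y,y}$ = sequences converging to $y$ (Two's selections count as being in $\Gamma_{Y,y}$ iff they converge to $y$). Games: in $G_1(\mathcal E,\mathcal C)$, at each inning $n\in\omega$ One plays $E_n\in\mathcal E$ and Two picks $x_n\in E_n$; Two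 wins iff $\{x_n:n\in\omega\}\in\mathcal C$; $\neg\mathcal C$ is the complement of $\mathcal C$. Strategies for One map finite sequences of Two's moves to moves; predetermined strategies depend only on the inning number. Strategies for Two map finite sequences of One's moves to an element of the last one; Markov strategies depend only on One's last move and the inning number. $\mathrm{I}\uparrow G$, $\mathrm{I}\underset{\mathrm{pre}}{\uparrow}G$, $\mathrm{II}\uparrow G$, $\mathrm{II}\underset{\mathrm{mark}}{\uparrow}G$ denote existence of a winning strategy / winning predetermined strategy for One / winning strategy / winning Markov strategy for Two. $G\le_{\mathrm{II}}H$ means: $\mathrm{II}\underset{\mathrm{mark}}{\uparrow}G\Rightarrow\mathrm{II}\underset{\mathrm{mark}}{\uparrow}H$, $\mathrm{II}\uparrow G\Rightarrow\mathrm{II}\uparrow H$, $\mathrm{I}\not\uparrow G\Rightarrow\mathrm{I}\not\uparrow H$, and $\mathrm{I}\not\underset{\mathrm{pre}}{\uparrow}G\Rightarrow\mathrm{I}\not\underset{\mathrm{pre}}{\uparrow}H$; $G,H$ are equivalent if $G\le_{\mathrm{II}}H$ and $H\le_{\mathrm{II}}G$. $G,H$ are dual if $\mathrm{I}\uparrow G\iff\mathrm{II}\uparrow H$, $\mathrm{I}\uparrow H\iff\mathrm{II}\uparrow G$, $\mathrm{I}\underset{\mathrm{pre}}{\uparrow}G\iff\mathrm{II}\underset{\mathrm{mark}}{\uparrow}H$, and $\mathrm{I}\underset{\mathrm{pre}}{\uparrow}H\iff\mathrm{II}\underset{\mathrm{mark}}{\uparrow}G$. Two games are equivalent for player One if One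 has a winning strategy in one iff in the other, and a winning predetermined strategy in one iff in the other; equivalent for player Two if Two has a winning strategy in one iff in the other, and a winning Markov strategy in one iff in the other. $\mathrm{cof}(\mathcal E;\mathcal F,\le)$ is the least cardinal $\kappa$ such that some $\{E_\alpha:\alpha<\kappa\}\subseteq\mathcal E$ has every $F\in\mathcal F$ satisfying $F\le E_\alpha$ for some $\alpha$; here $\le$ is $\supseteq$ on sets of functions. *)

From HB Require Import structures.
From mathcomp Require Import all_boot all_order all_algebra.
From mathcomp Require Import all_classical all_reals all_analysis.
Set Implicit Arguments. Unset Strict Implicit. Unset Printing Implicit Defensive.
Import Order.TTheory GRing.Theory Num.Theory.
Import numFieldNormedType.Exports.
Local Open Scope classical_set_scope.
Local Open Scope ring_scope.

(* A single-selection game: One plays members of [gmoves], Two picks a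
   point of the played set; Two wins a play (x_n)_n iff [gwin x]. *)
Record game := Game {
  gpt : Type;
  gmoves : set (set gpt);
  gwin : (nat -> gpt) -> Prop }.
Arguments gmoves : clear implicits.
Arguments gwin : clear implicits.

Definition G1 (T : Type) (E : set (set T)) (C : set (set T)) : game :=
  @Game T E (fun x => C (range x)).
Definition G1neg (T : Type) (E : set (set T)) (C : set (set T)) : game :=
  @Game T E (fun x => ~ C (range x)).
(* G_1(E, C) when the winning condition is a condition on the sequence of
   selections (used for Gamma_{Y,y}: sequences converging to y). *)
Definition G1seq (T : Type) (E : set (set T)) (W : (nat -> T) -> Prop) : game :=
  @Game T E W.

Definition I_wins (G : game) : Prop :=
  exists sigma : seq (gpt G) -> set (gpt G),
    (forall s, gmoves G (sigma s)) /\
    forall x : nat -> gpt G,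
      (forall n, sigma (mkseq x n) (x n)) -> ~ gwin G x.

(* One wins with a predetermined strategy (depends only on the inning). *)
Definition I_wins_pre (G : game) : Prop :=
  exists e : nat -> set (gpt G),
    (forall n, gmoves G (e n)) /\
    forall x : nat -> gpt G, (forall n, e n (x n)) -> ~ gwin G x.

Definition II_wins (G : game) : Prop :=
  exists tau : seq (set (gpt G)) -> gpt G,
    (forall s E, gmoves G E -> E (tau (rcons s E))) /\
    forall e : nat -> set (gpt G), (forall n, gmoves G (e n)) ->
      gwin G (fun n => tau (mkseq e n.+1)).

(* Two wins with a Markov strategy (depends on One's last move and the
   inning number). *)
Definition II_wins_mark (G : game) : Prop :=
  exists tau : set (gpt G) -> nat -> gpt G,
    (forall E n, gmoves G E -> E (tau E n)) /\
    forall e : nat -> set (gpt G), (forall n, gmoves G (e n)) ->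
      gwin G (fun n => tau (e n) n).

Definition le_II (G H : game) : Prop :=
  [/\ II_wins_mark G -> II_wins_mark H,
      II_wins G -> II_wins H,
      ~ I_wins G -> ~ I_wins H &
      ~ I_wins_pre G -> ~ I_wins_pre H].

Definition games_equiv (G H : game) : Prop := le_II G H /\ le_II H G.

Definition games_dual (G H : game) : Prop :=
  [/\ I_wins G <-> II_wins H,
      I_wins H <-> II_wins G,
      I_wins_pre G <-> II_wins_mark H &
      I_wins_pre H <-> II_wins_mark G].

Definition equiv_for_One (G H : game) : Prop :=
  (I_wins G <-> I_wins H) /\ (I_wins_pre G <-> I_wins_pre H).

Definition equiv_for_Two (G H : game) : Prop :=
  (II_wins G <-> II_wins H) /\ (II_wins_mark G <-> II_wins_mark H).

Section OpenSpace.
Variables (T : Type) (op : set (set T)).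

Definition nbhd_open (y : T) : set (set T) := [set U | op U /\ U y].
Definition nonempty_open : set (set T) := [set U | op U /\ U !=set0].
Definition clos (S : set T) (y : T) : Prop :=
  forall U, op U -> U y -> U `&` S !=set0.
Definition dense_sets : set (set T) := [set S | forall y, clos S y].
Definition closed_discrete : set (set T) :=
  [set S | (forall y, clos S y -> S y) /\
           (forall y, S y -> exists U, op U /\ U `&` S = [set y])].
Definition Omega_pt (y : T) : set (set T) := [set S | clos S y].
Definition converges_to (s : nat -> T) (y : T) : Prop :=
  forall U, op U -> U y -> exists N, forall n, (N <= n)%N -> U (s n).
End OpenSpace.

Section Covers.
Variable X : topologicalType.

Definition open_cover (U : set (set X)) : Prop :=
  (forall V, U V -> open V) /\ (forall x, exists2 V, U V & V x).

Definition omega_cover (U : set (set X)) : Prop :=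
  [/\ open_cover U, ~ U setT &
      forall F : set X, finite_set F -> exists2 V, U V & F `<=` V].

Definition k_cover (U : set (set X)) : Prop :=
  [/\ open_cover U, ~ U setT &
      forall K : set X, compact K -> exists2 V, U V & K `<=` V].

Definition gamma_cover (U : set (set X)) : Prop :=
  [/\ ~ finite_set U, open_cover U, ~ U setT &
      forall F : set X, finite_set F ->
        finite_set [set V | U V /\ ~ (F `<=` V)]].

Definition nbhds_of_set (K : set X) : set (set X) :=
  [set U | open U /\ U <> setT /\ K `<=` U].

Definition N_KX : set (set (set X)) :=
  [set nbhds_of_set K | K in [set K | compact K /\ K !=set0]].

Definition sigma_compact : Prop :=
  exists K : nat -> set X, (forall n, compact (K n)) /\
    \bigcup_n K n = setT.
End Covers.

(* Tychonoff = T1 + completely regular (functions into [0,1]) *)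
Definition tychonoff_space (R : realType) (X : topologicalType) : Prop :=
  accessible_space X /\
  forall (x : X) (B : set X), closed B -> ~ B x ->
    exists f : X -> R, [/\ continuous f, forall y, 0 <= f y <= 1,
                           f x = 0 & forall y, B y -> f y = 1].

Section Cfun.
Variables (R : realType) (X : topologicalType).

Definition CX := {f : X -> R | continuous f}.

Definition CX0 : CX := exist _ (fun=> 0) (@cst_continuous X R 0).

Definition basic_nbhd (f : CX) (A : set X) (eps : R) : set CX :=
  [set g | forall x, A x -> `|proj1_sig f x - proj1_sig g x| < eps].

Definition gen_open (adm : set (set X)) : set (set CX) :=
  [set U | forall f, U f -> exists A, adm A /\
     exists2 eps : R, 0 < eps & basic_nbhd f A eps `<=` U].

Definition Cp_open : set (set CX) := gen_open (@finite_set X).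
Definition Ck_open : set (set CX) := gen_open (@compact X).

Definition cofinal_fam (I : Type) (e : I -> set CX) (E F : set (set CX)) :=
  (forall i, E (e i)) /\ (forall V, F V -> exists i, e i `<=` V).
Definition cof_eq_omega (E F : set (set CX)) : Prop :=
  (exists e : nat -> set CX, cofinal_fam e E F) /\
  (forall (n : nat) (e : 'I_n -> set CX), ~ cofinal_fam e E F).
End Cfun.
Arguments CX0 : clear implicits.
Arguments Cp_open : clear implicits.
Arguments Ck_open : clear implicits.

Section Games.
Variables (R : realType) (X : topologicalType).
Local Notation C := (CX R X).
Local Notation zero := (CX0 R X).

Definition G_NK_notOmega : game := G1neg (@N_KX X) (@omega_cover X).
Definition G_Nk0_notOmegap : game :=
  G1neg (nbhd_open (Ck_open R X) zero) (Omega_pt (Cp_open R X) zero).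
Definition G_Tk_CDp : game :=
  G1 (nonempty_open (Ck_open R X)) (closed_discrete (Cp_open R X)).
Definition G_K_Omega : game := G1 (@k_cover X) (@omega_cover X).
Definition G_Omegak0_Omegap : game :=
  G1 (Omega_pt (Ck_open R X) zero) (Omega_pt (Cp_open R X) zero).
Definition G_Dk_Omegap : game :=
  G1 (dense_sets (Ck_open R X)) (Omega_pt (Cp_open R X) zero).
Definition G_NK_notGamma : game := G1neg (@N_KX X) (@gamma_cover X).
Definition G_Nk0_notGammap : game :=
  G1seq (nbhd_open (Ck_open R X) zero)
        (fun s => ~ converges_to (Cp_open R X) s zero).
Definition G_K_Gamma : game := G1 (@k_cover X) (@gamma_cover X).
End Games.
Arguments G_NK_notOmega : clear implicits.
Arguments G_K_Omega : clear implicits.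
Arguments G_NK_notGamma : clear implicits.
Arguments G_K_Gamma : clear implicits.
Arguments G_Nk0_notOmegap : clear implicits.
Arguments G_Tk_CDp : clear implicits.
Arguments G_Omegak0_Omegap : clear implicits.
Arguments G_Dk_Omegap : clear implicits.
Arguments G_Nk0_notGammap : clear implicits.

From HB Require Import structures.
From mathcomp Require Import all_boot all_order all_algebra.
From mathcomp Require Import all_classical all_reals all_analysis.
From mathcomp Require Import finmap.
From mathcomp.algebra_tactics Require Import lra.

(* The games on C(X) are compared with the cover games on X by translating
   moves: One's move N(K) corresponds to a basic C_k-neighbourhood [g; K, e],
   and an open set U containing K to a function close to g on K with prescribed
   values off U; it exists because in a Tychonoff space a compact set and a
   disjoint closed set are separated by a continuous function.  Such a
   translation of moves and answers transfers all four kinds of winning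
   strategies.  The k-cover games are dual to the neighbourhood games because
   every k-cover meets every N(K) and every selector on N[K(X)] has a k-cover as
   its image.  Compact spaces, which have no k-cover, are treated separately.
   One's strategies for the Omega and the Gamma goals are interconverted by
   refining her moves along all subsequences of the play, and One wins
   G_1(N[K(X)], ~Omega) with a predetermined strategy exactly when the compact
   sets underlying her moves can be chosen to exhaust X. *)

Set Implicit Arguments. Unset Strict Implicit. Unset Printing Implicit Defensive.
Import Order.TTheory GRing.Theory Num.Theory.
Import numFieldNormedType.Exports.
Local Open Scope classical_set_scope.
Local Open Scope ring_scope.

Lemma partial_choice (A B : Type) (b0 : B) (D : set A) (P : A -> B -> Prop) :
  (forall a, D a -> exists b, P a b) -> exists f : A -> B, forall a, D a -> P a (f a).
Proof.
move=> hP; have /choice[f hf] : forall a, exists b, D a -> P a b.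
  by move=> a; have [/hP[b hb]|nDa] := pselect (D a); [exists b | exists b0].
by exists f.
Qed.

Lemma take_mkseq (T : Type) (f : nat -> T) k n :
  (k <= n)%N -> take k (mkseq f n) = mkseq f k.
Proof. by move=> hk; rewrite /mkseq -map_take take_iota (minn_idPl hk). Qed.

Section Strategies.
Variable G : game.

Lemma I_wins_preW : I_wins_pre G -> I_wins G.
Proof.
move=> [e [he hw]]; exists (fun s => e (size s)); split => // x hx.
by apply: hw => n; move: (hx n); rewrite size_mkseq.
Qed.

Lemma II_wins_markW : II_wins_mark G -> II_wins G.
Proof.
move=> [t [ht hw]]; exists (fun s => t (last set0 s) (size s).-1); split.
  by move=> s E hE; rewrite last_rcons; apply: ht.
move=> e he; under eq_fun do rewrite mkseqS last_rcons size_rcons size_mkseq.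
exact: hw.
Qed.

Lemma I_wins_II_wins_excl : I_wins G -> II_wins G -> False.
Proof.
move=> [sg [hs ws]] [tau [ht wt]].
pose ones (h : seq (gpt G)) := [seq sg (take k h) | k <- iota 0 (size h).+1].
pose fix hist n := if n is m.+1 then rcons (hist m) (tau (ones (hist m))) else [::].
pose x n := tau (ones (hist n)).
have histE n : hist n = mkseq x n by elim: n => [|n IH] //=; rewrite mkseqS -IH.
pose e n := sg (mkseq x n).
have onesE n : ones (mkseq x n) = mkseq e n.+1.
  rewrite /ones size_mkseq /e /mkseq; apply/eq_in_map => k.
  by rewrite mem_iota add0n => /andP[_ hk]; rewrite -/(mkseq x n) take_mkseq.
have xE : x = (fun n => tau (mkseq e n.+1)).
  by apply: funext => n; rewrite /x histE onesE.
apply: (ws x) => [n|].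
  have -> : x n = tau (rcons (mkseq e n) (e n)) by rewrite xE /= mkseqS.
  by apply: ht; apply: hs.
by rewrite xE; apply: wt => n; apply: hs.
Qed.

Lemma II_wins_mark_not_I_wins : II_wins_mark G -> ~ I_wins G.
Proof. by move=> /II_wins_markW hII hI; apply: (I_wins_II_wins_excl hI hII). Qed.

End Strategies.

Lemma le_II_trans G H K : le_II G H -> le_II H K -> le_II G K.
Proof. by move=> [a b c d] [a' b' c' d']; split; auto. Qed.

Lemma games_equiv_refl G : games_equiv G G.
Proof. by []. Qed.

Lemma games_equiv_sym G H : games_equiv G H -> games_equiv H G.
Proof. by move=> []. Qed.

Lemma games_equiv_trans G H K :
  games_equiv G H -> games_equiv H K -> games_equiv G K.
Proof. by move=> [a b] [c d]; split; apply: le_II_trans; eauto. Qed.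

Lemma games_equivP G H : games_equiv G H <->
  [/\ I_wins G <-> I_wins H, I_wins_pre G <-> I_wins_pre H,
      II_wins G <-> II_wins H & II_wins_mark G <-> II_wins_mark H].
Proof.
have notP (P Q : Prop) : (~ P -> ~ Q) -> (~ Q -> ~ P) -> (P <-> Q).
  by move=> PQ QP; split=> [p|q]; apply: contrapT => n; [exact: QP n p | exact: PQ n q].
split=> [[[a b c d] [a' b' c' d']]|[[a a'] [b b'] [c c'] [d d']]].
  by split; [apply: notP | apply: notP | split | split].
by split; split=> //; [move=> + /a'|move=> + /b'|move=> + /a|move=> + /b].
Qed.

Lemma games_dual_equiv G H G' H' :
  games_dual G H -> games_equiv G G' -> games_equiv H H' -> games_dual G' H'.
Proof.
move=> [a b c d] /games_equivP[g1 g2 g3 g4] /games_equivP[h1 h2 h3 h4].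
by split; [rewrite -g1 -h3 | rewrite -h1 -g3 | rewrite -g2 -h4 | rewrite -h2 -g4].
Qed.

Lemma games_equiv_I_wins_pre G H :
  I_wins_pre G -> I_wins_pre H -> games_equiv G H.
Proof.
move=> pG pH; have noII K : I_wins_pre K -> ~ II_wins K.
  by move=> /I_wins_preW /I_wins_II_wins_excl.
apply/games_equivP; split.
- by split=> _; apply: I_wins_preW.
- by [].
- by split=> h; [case: (noII _ pG h) | case: (noII _ pH h)].
- by split=> /II_wins_markW h; [case: (noII _ pG h) | case: (noII _ pH h)].
Qed.

Lemma games_equiv_II_wins_mark G H :
  II_wins_mark G -> II_wins_mark H -> games_equiv G H.
Proof.
move=> mG mH; apply/games_equivP; split.
- by split=> h; [case: (II_wins_mark_not_I_wins mG h)
                | case: (II_wins_mark_not_I_wins mH h)].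
- by split=> /I_wins_preW h; [case: (II_wins_mark_not_I_wins mG h)
                             | case: (II_wins_mark_not_I_wins mH h)].
- by split=> _; apply: II_wins_markW.
- by [].
Qed.

(* One's move [E] in [H] at inning [n] is answered in [G] through the move
   [back n E]; Two's reply [p] there is carried back to [fwd n p E]. *)
Section TranslationMaps.
Variables (G H : game) (back : nat -> set (gpt H) -> set (gpt G))
  (fwd : nat -> gpt G -> set (gpt H) -> gpt H).
Hypothesis back_move : forall n E, gmoves H E -> gmoves G (back n E).
Hypothesis fwd_pick : forall n E p, gmoves H E -> back n E p -> E (fwd n p E).
Hypothesis fwd_win : forall (E : nat -> set (gpt H)) (p : nat -> gpt G),
  (forall n, gmoves H (E n)) -> (forall n, back n (E n) (p n)) ->
  gwin G p -> gwin H (fun n => fwd n (p n) (E n)).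

Lemma translate_II_wins_mark : II_wins_mark G -> II_wins_mark H.
Proof.
move=> [t [ht hw]]; exists (fun E n => fwd n (t (back n E) n) E); split.
  by move=> E n hE; apply: fwd_pick => //; apply: ht; apply: back_move.
move=> e he; apply: (fwd_win he (p := fun n => t (back n (e n)) n)).
  by move=> n; apply: ht; apply: back_move.
by apply: hw => n; apply: back_move.
Qed.

Lemma translate_II_wins : II_wins G -> II_wins H.
Proof.
move=> [t [ht hw]].
pose bk (s : seq (set (gpt H))) := [seq back i (nth set0 s i) | i <- iota 0 (size s)].
have bk_rcons s E : bk (rcons s E) = rcons (bk s) (back (size s) E).
  rewrite /bk size_rcons -addn1 iotaD map_cat add0n /= cats1.
  congr rcons; last by rewrite nth_rcons ltnn eqxx.
  apply/eq_in_map => i; rewrite mem_iota add0n => /andP[_ hi].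
  by rewrite nth_rcons hi.
exists (fun s => fwd (size s).-1 (t (bk s)) (last set0 s)); split.
  move=> s E hE; rewrite size_rcons last_rcons bk_rcons /=.
  by apply: fwd_pick => //; apply: ht; apply: back_move.
move=> e he.
have bk_mkseq n : bk (mkseq e n) = mkseq (fun i => back i (e i)) n.
  rewrite /bk size_mkseq /mkseq; apply/eq_in_map => i.
  by rewrite mem_iota add0n => /andP[_ hi]; rewrite -/(mkseq e n) nth_mkseq.
under eq_fun do rewrite size_mkseq bk_mkseq [mkseq e _]mkseqS last_rcons.
apply: fwd_win => // [n|]; first by rewrite mkseqS; apply: ht; apply: back_move.
by apply: hw => n; apply: back_move.
Qed.

Lemma translate_I_wins : I_wins H -> I_wins G.
Proof.
move=> [sH [hsH wsH]].
pose ys (h : seq (gpt G)) :=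
  foldl (fun acc p => rcons acc (fwd (size acc) p (sH acc))) [::] h.
have ys_rcons h p : ys (rcons h p) = rcons (ys h) (fwd (size (ys h)) p (sH (ys h))).
  by rewrite /ys foldl_rcons.
have size_ys h : size (ys h) = size h.
  by elim/last_ind: h => [//|h p IH]; rewrite ys_rcons !size_rcons IH.
exists (fun h => back (size h) (sH (ys h))); split; first by move=> s; apply: back_move.
move=> x hx gx; pose E n := sH (ys (mkseq x n)).
have hxb n : back n (E n) (x n) by move: (hx n); rewrite size_mkseq.
have ys_mkseq n : ys (mkseq x n) = mkseq (fun n => fwd n (x n) (E n)) n.
  by elim: n => [//|n IH]; rewrite mkseqS ys_rcons size_ys size_mkseq mkseqS -IH.
apply: (wsH _ _ (fwd_win (E := E) (fun n => hsH _) hxb gx)) => n.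
by rewrite -ys_mkseq; apply: fwd_pick; [apply: hsH | apply: hxb].
Qed.

Lemma translate_I_wins_pre : I_wins_pre H -> I_wins_pre G.
Proof.
move=> [eH [heH weH]]; exists (fun n => back n (eH n)); split.
  by move=> n; apply: back_move.
move=> x hx /(fwd_win heH hx); apply: weH => n; exact: fwd_pick.
Qed.

Lemma le_II_of_maps : le_II G H.
Proof.
split=> [||nI /translate_I_wins|nI /translate_I_wins_pre] //.
  exact: translate_II_wins_mark.
exact: translate_II_wins.
Qed.

End TranslationMaps.

Lemma le_II_of_translation (G H : game) (q0 : gpt H)
    (pull : nat -> set (gpt H) -> set (gpt G) -> Prop)
    (push : nat -> set (gpt H) -> gpt G -> gpt H -> Prop) :
  (forall n E, gmoves H E -> exists2 E', gmoves G E' & pull n E E') ->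
  (forall n E E' p, gmoves H E -> pull n E E' -> E' p ->
     exists2 q, E q & push n E p q) ->
  (forall E E' p q, (forall n, gmoves H (E n)) -> (forall n, gmoves G (E' n)) ->
     (forall n, pull n (E n) (E' n)) -> (forall n, E' n (p n)) ->
     (forall n, E n (q n)) -> (forall n, push n (E n) (p n) (q n)) ->
     gwin G p -> gwin H q) ->
  le_II G H.
Proof.
move=> pull_move push_pick push_win.
have pull_ex (nE : nat * set (gpt H)) :
    gmoves H nE.2 -> exists E', gmoves G E' /\ pull nE.1 nE.2 E'.
  by move=> /(pull_move nE.1)[E' ? ?]; exists E'.
have [back backP] := partial_choice set0 pull_ex.
have push_ex (nEp : nat * set (gpt H) * gpt G) :
    gmoves H nEp.1.2 /\ back nEp.1 nEp.2 ->
    exists q, nEp.1.2 q /\ push nEp.1.1 nEp.1.2 nEp.2 q.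
  move: nEp => [[n E] p] /= [hE hp].
  by have [q ? ?] := push_pick _ _ _ _ hE (backP (n, E) hE).2 hp; exists q.
have [fwd fwdP] := partial_choice q0 push_ex.
apply: (@le_II_of_maps G H (fun n E => back (n, E)) (fun n p E => fwd (n, E, p))).
- by move=> n E hE; case: (backP (n, E) hE).
- by move=> n E p hE hp; case: (fwdP (n, E, p) (conj hE hp)).
- move=> E p hE hp; apply: (push_win E (fun n => back (n, E n)) p) => // n.
  + exact: (backP (n, E n) (hE n)).1.
  + exact: (backP (n, E n) (hE n)).2.
  + by case: (fwdP (n, E n, p n) (conj (hE n) (hp n))).
  + by case: (fwdP (n, E n, p n) (conj (hE n) (hp n))).
Qed.

Section Duality.
Variables (P : Type) (p0 : P).

Definition refined_by_selectors (M1 M2 : set (set P)) :=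
  forall s : set P -> P, (forall F, M2 F -> F (s F)) -> exists2 E, M1 E & E `<=` s @` M2.

(* Two answers One's move in the second game by a point of it lying in the
   move that One's strategy prescribes in the first game. *)
Lemma II_wins_of_I_wins_meet (M1 M2 : set (set P)) (W1 W2 : (nat -> P) -> Prop) :
  (forall E F, M1 E -> M2 F -> E `&` F !=set0) -> (forall x, ~ W1 x -> W2 x) ->
  (I_wins (Game M1 W1) -> II_wins (Game M2 W2)) /\
  (I_wins_pre (Game M1 W1) -> II_wins_mark (Game M2 W2)).
Proof.
move=> meet hW; split.
- move=> [sg [hs ws]] /=.
  have pick_ex (hF : seq P * set P) : M2 hF.2 -> exists p, (sg hF.1 `&` hF.2) p.
    by move=> /(meet _ _ (hs hF.1)).
  have [pick pickP] := partial_choice p0 pick_ex.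
  pose picks s := foldl (fun h F => rcons h (pick (h, F))) [::] s.
  have picks_rcons s F : picks (rcons s F) = rcons (picks s) (pick (picks s, F)).
    by rewrite /picks foldl_rcons.
  exists (fun s => last p0 (picks s)); split.
    move=> s E hE /=; rewrite picks_rcons last_rcons.
    by case: (pickP (picks s, E) hE).
  move=> e he /=; set x := fun n => last p0 (picks (mkseq e n.+1)).
  have picks_mkseq n : picks (mkseq e n) = mkseq x n.
    elim: n => [//|n IH]; rewrite mkseqS picks_rcons [RHS]mkseqS IH; congr rcons.
    by rewrite /x mkseqS picks_rcons last_rcons IH.
  apply/hW/ws => n; rewrite /x mkseqS picks_rcons last_rcons picks_mkseq.
  by case: (pickP (mkseq x n, e n) (he n)).
- move=> [e [he we]] /=.
  have pick_ex (Fn : set P * nat) : M2 Fn.1 -> exists p, (e Fn.2 `&` Fn.1) p.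
    by move=> /(meet _ _ (he Fn.2)).
  have [pick pickP] := partial_choice p0 pick_ex.
  exists (fun F n => pick (F, n)); split; first by move=> F n /(pickP (F, n))[].
  by move=> e' he'; apply/hW/we => n; case: (pickP (e' n, n) (he' n)).
Qed.

(* One plays the image of Two's (Markov) strategy over all possible moves. *)
Lemma I_wins_of_II_wins_selectors (M1 M2 : set (set P)) (W1 W2 : (nat -> P) -> Prop) :
  refined_by_selectors M1 M2 -> (forall x, W2 x -> ~ W1 x) ->
  (II_wins (Game M2 W2) -> I_wins (Game M1 W1)) /\
  (II_wins_mark (Game M2 W2) -> I_wins_pre (Game M1 W1)).
Proof.
move=> refine hW; split.
- move=> [tau [ht wt]] /=.
  have /choice[mv mvP] (s : seq (set P)) :
      exists E, M1 E /\ E `<=` (fun F => tau (rcons s F)) @` M2.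
    by have [E ? ?] := refine (fun F => tau (rcons s F)) (ht s); exists E.
  have rsel_ex (sp : seq (set P) * P) : ((fun F => tau (rcons sp.1 F)) @` M2) sp.2 ->
      exists F, M2 F /\ tau (rcons sp.1 F) = sp.2.
    by move=> [F ? ?]; exists F.
  have [rsel rselP] := partial_choice set0 rsel_ex.
  pose ks h := foldl (fun s p => rcons s (rsel (s, p))) [::] h.
  have ks_rcons h p : ks (rcons h p) = rcons (ks h) (rsel (ks h, p)).
    by rewrite /ks foldl_rcons.
  exists (fun h => mv (ks h)); split; first by move=> s; case: (mvP (ks s)).
  move=> x hx /=; pose e n := rsel (ks (mkseq x n), x n).
  have ks_mkseq n : ks (mkseq x n) = mkseq e n.
    by elim: n => [//|n IH]; rewrite mkseqS ks_rcons [RHS]mkseqS -IH.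
  have eP n : M2 (e n) /\ tau (rcons (mkseq e n) (e n)) = x n.
    rewrite -ks_mkseq; apply: rselP; case: (mvP (ks (mkseq x n))) => _; apply.
    exact: hx.
  apply: hW; have -> : x = (fun n => tau (mkseq e n.+1)).
    by apply: funext => n; rewrite mkseqS; case: (eP n).
  by apply: wt => n; case: (eP n).
- move=> [tau [ht wt]] /=.
  have /choice[mv mvP] (n : nat) : exists E, M1 E /\ E `<=` (tau^~ n) @` M2.
    by have [E ? ?] := refine (tau^~ n) (fun F => ht F n); exists E.
  exists mv; split; first by move=> n; case: (mvP n).
  move=> x hx.
  have /choice[e eP] (n : nat) : exists F, M2 F /\ tau F n = x n.
    by case: (mvP n) => _ /(_ _ (hx n))[F ? ?]; exists F.
  apply: hW; have -> : x = (fun n => tau (e n) n).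
    by apply: funext => n; case: (eP n).
  by apply: wt => n; case: (eP n).
Qed.

Lemma refined_by_selectors_image (M1 M2 : set (set P)) :
  (forall s : set P -> P, (forall F, M2 F -> F (s F)) -> M1 (s @` M2)) ->
  refined_by_selectors M1 M2.
Proof. by move=> h s hs; exists (s @` M2) => //; apply: h. Qed.

(* If the selector [s] on [M2] were a counterexample, a selector on [M1]
   avoiding the image of [s] would produce a member [F] of [M2] with [s F]
   outside the image of [s]. *)
Lemma refined_by_selectors_dual (M1 M2 : set (set P)) :
  (forall f : set P -> P, (forall E, M1 E -> E (f E)) -> M2 (f @` M1)) ->
  refined_by_selectors M1 M2.
Proof.
move=> h s hs; apply: contrapT => hn.
have avoid_ex (E : set P) : M1 E -> exists p, E p /\ ~ (s @` M2) p.
  move=> hE; apply: contrapT => hne; apply: hn; exists E => // p hp.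
  by apply: contrapT => hp'; apply: hne; exists p.
have [f fP] := partial_choice p0 avoid_ex.
have hfM2 : M2 (f @` M1) by apply: h => E /fP[].
have [E hE hEs] := hs _ hfM2.
by case: (fP E hE) => _; apply; rewrite hEs; exists (f @` M1).
Qed.

Lemma G1neg_G1_dual (Rf Af W : set (set P)) :
  (forall A R, Af A -> Rf R -> A `&` R !=set0) ->
  (forall f : set P -> P, (forall R, Rf R -> R (f R)) -> Af (f @` Rf)) ->
  games_dual (G1neg Rf W) (G1 Af W).
Proof.
move=> meet sel.
have meet' R A : Rf R -> Af A -> R `&` A !=set0.
  by move=> hR hA; rewrite setIC; apply: meet.
have [a1 a2] := II_wins_of_I_wins_meet meet' (W1 := fun x => ~ W (range x))
  (W2 := fun x => W (range x)) (fun x => @contrapT _).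
have [b1 b2] := I_wins_of_II_wins_selectors (refined_by_selectors_dual sel)
  (W1 := fun x => ~ W (range x)) (W2 := fun x => W (range x)) (fun x h hn => hn h).
have [c1 c2] := II_wins_of_I_wins_meet meet (W1 := fun x => W (range x))
  (W2 := fun x => ~ W (range x)) (fun x h => h).
have [d1 d2] := I_wins_of_II_wins_selectors (refined_by_selectors_image sel)
  (W1 := fun x => W (range x)) (W2 := fun x => ~ W (range x)) (fun x h hn => h hn).
by split; split.
Qed.

End Duality.

Lemma I_wins_mono (P : Type) (M : set (set P)) (W W' : (nat -> P) -> Prop) :
  (forall x, W x -> W' x) ->
  (I_wins (Game M W') -> I_wins (Game M W)) /\
  (I_wins_pre (Game M W') -> I_wins_pre (Game M W)).
Proof.
move=> WW'; split=> -[s [hs ws]]; exists s; split=> // x hx /WW'; exact: ws.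
Qed.

Lemma increasing_extraction (Q : nat -> Prop) :
  (forall N, exists n, (N <= n)%N /\ Q n) ->
  exists phi : nat -> nat, (forall i, (phi i < phi i.+1)%N) /\ forall i, Q (phi i).
Proof.
move=> hQ; have [nx nxP] := choice hQ.
pose fix phi i := if i is j.+1 then nx (phi j).+1 else nx 0%N.
exists phi; split; first by move=> i /=; case: (nxP (phi i).+1).
by case=> [|i] /=; [exact: (nxP 0%N).2 | exact: (nxP (phi i).+1).2].
Qed.

Inductive subsequence {P : Type} : seq P -> seq P -> Prop :=
| subsequence_nil : subsequence [::] [::]
| subsequence_skip t h a : subsequence t h -> subsequence t (rcons h a)
| subsequence_take t h a : subsequence t h -> subsequence (rcons t a) (rcons h a).

Section Subsequences.
Variable P : Type.
Implicit Types t h : seq P.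

Lemma subsequence0s h : subsequence [::] h.
Proof.
elim/last_ind: h => [|h a IH]; [exact: subsequence_nil | exact: subsequence_skip].
Qed.

Lemma subsequence_nilE t : subsequence t [::] -> t = [::].
Proof. by move Eh : [::] => h st; case: st Eh => // ? h0 ? _; case: h0. Qed.

Lemma subsequence_rconsE t h a : subsequence t (rcons h a) ->
  subsequence t h \/ exists2 t', t = rcons t' a & subsequence t' h.
Proof.
move Eh' : (rcons h a) => h' st; case: st Eh' => [|t0 h0 a0 st0|t0 h0 a0 st0].
- by case: (h).
- by move=> /rcons_inj[-> _]; left.
- by move=> /rcons_inj[-> ->]; right; exists t0.
Qed.

Lemma subsequence_mkseq (x : nat -> P) (phi : nat -> nat) :
  (forall i, (phi i < phi i.+1)%N) ->
  forall i, subsequence (mkseq (x \o phi) i) (mkseq x (phi i)).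
Proof.
move=> phiS; elim=> [|i IH]; first exact: subsequence0s.
suff step k : (phi i < k)%N -> subsequence (mkseq (x \o phi) i.+1) (mkseq x k).
  exact: step.
elim: k => [//|k IHk]; rewrite ltnS leq_eqVlt => /orP[/eqP <-|hk].
  by rewrite !mkseqS; exact: subsequence_take.
by rewrite [mkseq x k.+1]mkseqS; apply/subsequence_skip/IHk.
Qed.

End Subsequences.

Section OneSubsequences.
Variables (P : Type) (M : set (set P)).
Hypothesis M_directed : forall E1 E2, M E1 -> M E2 -> exists2 E, M E & E `<=` E1 `&` E2.

Lemma refine_along_subsequences (F : seq P -> set P) : (forall t, M (F t)) ->
  forall h, exists2 E, M E & forall t, subsequence t h -> E `<=` F t.
Proof.
move=> MF h; elim/last_ind: h F MF => [|h a IH] F MF.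
  by exists (F [::]) => // t /subsequence_nilE ->.
have [E1 ME1 E1F] := IH F MF.
have [E2 ME2 E2F] := IH (fun t => F (rcons t a)) (fun t => MF _).
have [E ME EE12] := M_directed ME1 ME2.
exists E => // t st p Ep; have [Ep1 Ep2] := EE12 p Ep.
have [ht|[t' -> ht]] := subsequence_rconsE st.
  exact: E1F ht p Ep1.
exact: E2F ht p Ep2.
Qed.

(* One plays a move refining what her old strategy prescribes along every
   subsequence of the picks so far (for a predetermined strategy: all earlier
   moves), so the subsequence given by [extract] is a play lost by Two. *)
Lemma I_wins_of_subsequences (W W' : (nat -> P) -> Prop) :
  (forall x, (forall n, exists2 E, M E & E (x n)) -> W' x ->
     exists phi : nat -> nat, (forall i, (phi i < phi i.+1)%N) /\ W (x \o phi)) ->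
  (I_wins (Game M W) -> I_wins (Game M W')) /\
  (I_wins_pre (Game M W) -> I_wins_pre (Game M W')).
Proof.
move=> extract; split.
- move=> [sg [hs ws]] /=.
  have /choice[sg' sg'P] (h : seq P) :
      exists E, M E /\ forall t, subsequence t h -> E `<=` sg t.
    by have [E ? ?] := refine_along_subsequences hs h; exists E.
  exists sg'; split; first by move=> s; case: (sg'P s).
  move=> x hx /(extract x (fun n => ex_intro2 _ _ _ (sg'P _).1 (hx n))).
  move=> [phi [phiS hW]]; apply: (ws _ _ hW) => i.
  by case: (sg'P (mkseq x (phi i))) => _ /(_ _ (subsequence_mkseq x phiS i)); apply.
- move=> [e [he we]] /=.
  have /choice[e' e'P] (n : nat) : exists E, M E /\ forall k, (k <= n)%N -> E `<=` e k.
    elim: n => [|n [E [ME Ee]]].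
      by exists (e 0%N); split=> [|k]; [exact: he | rewrite leqn0 => /eqP ->].
    have [E' ME' E'E] := M_directed ME (he n.+1).
    exists E'; split=> // k; rewrite leq_eqVlt => /orP[/eqP ->|hk] p /E'E[].
      by [].
    by move=> Ep _; exact: Ee k hk p Ep.
  exists e'; split; first by move=> n; case: (e'P n).
  move=> x hx /(extract x (fun n => ex_intro2 _ _ _ (e'P n).1 (hx n))).
  move=> [phi [phiS hW]]; apply: (we _ _ hW) => i.
  have phi_ge : (i <= phi i)%N.
    by elim: i {hW} => [//|i IH]; apply: leq_ltn_trans IH (phiS i).
  by case: (e'P (phi i)) => _ /(_ i phi_ge); apply.
Qed.

End OneSubsequences.

Lemma inv_succ_gt0 (R : numFieldType) (n : nat) : 0 < (n.+1%:R : R)^-1.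
Proof. by rewrite invr_gt0 ltr0Sn. Qed.

Lemma inv_succ_lt (R : archiRealFieldType) (e : R) : 0 < e ->
  exists N, forall n, (N <= n)%N -> n.+1%:R^-1 < e.
Proof. by move=> e0; have [N _ hN] := near_infty_natSinv_lt (PosNum e0); exists N. Qed.

Section FunctionSpace.
Variables (R : realType) (X : topologicalType).
Local Notation C := (CX R X).
Implicit Types (f g : C) (A : set X) (adm : set (set X)) (S : set C).

Lemma CX_ext f g : sval f =1 sval g -> f = g.
Proof.
case: f g => [f cf] [g cg] /= /funext fg; subst g.
by congr exist; exact: Prop_irrelevance.
Qed.

Lemma open_lt_continuous (g : X -> R) (d : R) : continuous g -> open [set x | g x < d].
Proof. by move=> /continuousP/(_ _ (@open_lt _ d)). Qed.

Lemma open_norm_lt f (d : R) : open [set x | `|sval f x| < d].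
Proof.
apply: open_lt_continuous => x.
by apply: continuous_comp (proj2_sig f x) _; exact: norm_continuous.
Qed.

Definition cst_CX (c : R) : C := exist _ (fun=> c) (@cst_continuous X R c).

Lemma basic_nbhd_center f A (e : R) : 0 < e -> basic_nbhd f A e f.
Proof. by move=> e0 x _; rewrite subrr normr0. Qed.

Lemma basic_nbhd_trans f g A (e d : R) : basic_nbhd f A e g ->
  basic_nbhd g A d `<=` basic_nbhd f A (e + d).
Proof.
move=> fg h gh x Ax; rewrite (le_lt_trans (ler_distD (sval g x) _ _)) //.
by rewrite ltrD //; [exact: fg | exact: gh].
Qed.

Lemma basic_nbhdS f A B (e d : R) : B `<=` A -> d <= e ->
  basic_nbhd f A d `<=` basic_nbhd f B e.
Proof. by move=> BA de g fg x /BA Ax; exact: lt_le_trans (fg x Ax) de. Qed.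

Definition gen_interior adm S : set C :=
  [set g | exists A, adm A /\ exists2 e : R, 0 < e & basic_nbhd g A e `<=` S].

Lemma gen_open_interior adm S : gen_open adm (gen_interior adm S).
Proof.
move=> g [A [admA [d d0 gS]]]; exists A; split => //; exists (d / 2) => [|h gh].
  by rewrite divr_gt0.
exists A; split => //; exists (d / 2) => [|k hk]; first by rewrite divr_gt0.
by apply: gS; rewrite [d]splitr; exact: basic_nbhd_trans gh _ _.
Qed.

Lemma gen_interior_sub adm S : gen_interior adm S `<=` S.
Proof. by move=> g [A [_ [d d0 gS]]]; apply/gS/basic_nbhd_center. Qed.

Lemma gen_interior_basic adm f A (e : R) : adm A -> 0 < e ->
  gen_interior adm (basic_nbhd f A e) f.
Proof. by move=> admA e0; exists A; split => //; exists e. Qed.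

Lemma gen_nbhd_interior adm f A (e : R) : adm A -> 0 < e ->
  nbhd_open (gen_open adm) f (gen_interior adm (basic_nbhd f A e)).
Proof. by move=> admA e0; split; [exact: gen_open_interior | exact: gen_interior_basic]. Qed.

Lemma gen_closP adm S f : clos (gen_open adm) S f <->
  (forall A, adm A -> forall e : R, 0 < e -> exists2 g, S g & basic_nbhd f A e g).
Proof.
split=> [fS A admA e e0|fS U oU Uf].
  have [oI If] := gen_nbhd_interior f admA e0.
  by have [g [/gen_interior_sub fg Sg]] := fS _ oI If; exists g.
have [A [admA [e e0 fU]]] := oU f Uf.
by have [g Sg fg] := fS A admA e e0; exists g; split => //; exact: fU.
Qed.

Lemma gen_openI adm (U V : set C) : setU_closed adm ->
  gen_open adm U -> gen_open adm V -> gen_open adm (U `&` V).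
Proof.
move=> admU oU oV f [/oU[A [admA [e e0 fU]]] /oV[B [admB [d d0 fV]]]].
exists (A `|` B); split; first exact: admU.
exists (Num.min e d) => [|g fg]; first by rewrite lt_min e0 d0.
split; [apply: fU | apply: fV]; apply: basic_nbhdS fg => //;
  by [exact: subsetUl | exact: subsetUr | rewrite ge_min lexx ?orbT].
Qed.

End FunctionSpace.

(* [compact_cover] is stated for pointed spaces only; any point makes [T] one. *)
Section PointedCover.
Variables (T : topologicalType) (t : T).

Let pT : Type := T.
HB.instance Definition _ := Topological.on pT.
HB.instance Definition _ := isPointed.Build pT t.

Lemma compact_cover_pointed (A : set T) : compact A -> cover_compact A.
Proof. by move=> cA; have : @compact pT A by []; rewrite compact_cover. Qed.

End PointedCover.

Lemma continuous_bigmin (R : realType) (X : topologicalType) (I : Type) (s : seq I)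
    (F : I -> X -> R) : (forall i, continuous (F i)) ->
  continuous (fun y => \big[Num.min/1]_(i <- s) F i y).
Proof.
move=> cF; elim: s => [|i s IH].
  by under eq_fun do rewrite big_nil; exact: cst_continuous.
by under eq_fun do rewrite big_cons; exact: min_fun_continuous.
Qed.

Section Tychonoff.
Variables (R : realType) (X : topologicalType).
Hypothesis hX : tychonoff_space R X.
Local Notation C := (CX R X).

Lemma tychonoff_closed1 (x : X) : closed [set x].
Proof. exact: (@accessible_closed_set1 X hX.1 x). Qed.

(* Finitely many point separators [f k] (with [f k k = 0]) cover [K] by the
   sets [f k < 1/2]; their minimum [g] is [< 1/2] on [K] and [1] off [U], so
   [max 0 (2 g - 1)] works. *)
Lemma compact_open_separator (K U : set X) : compact K -> open U -> K `<=` U ->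
  exists u : C, (forall x, K x -> sval u x = 0) /\ (forall x, ~ U x -> sval u x = 1).
Proof.
move=> cK oU KU; have [[k0 _]|K0] := pselect (exists k, K k); last first.
  by exists (@cst_CX R X 1); split=> // x Kx; case: K0; exists x.
have sep_ex (k : X) : K k ->
    exists f : C, sval f k = 0 /\ forall y, ~ U y -> sval f y = 1.
  move=> /KU Uk; have [f [cf _ fk0 fU1]] := hX.2 k _ (open_closedC oU) (@^~ Uk).
  by exists (exist _ f cf).
have [f fP] := partial_choice (CX0 R X) sep_ex.
move: (compact_cover_pointed k0 cK) => /(_ X K (fun k => [set y | sval (f k) y < 2^-1])).
case=> [||D DK KD].
- by move=> k _; apply: open_lt_continuous; exact: proj2_sig (f k).
- by move=> k Kk; exists k => //=; rewrite (fP k Kk).1 invr_gt0.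
pose g y := \big[Num.min/1]_(k <- D) sval (f k) y.
have cg : continuous g by apply: continuous_bigmin => k; exact: proj2_sig (f k).
pose u y := Num.max 0 (2 * g y - 1).
have cu : continuous u.
  apply: max_fun_continuous; first exact: cst_continuous.
  move=> y; apply: (@continuousD _ _ _ (fun y => 2 * g y) (fun=> -1));
    last exact: cst_continuous.
  by apply: (@continuousM _ _ (fun=> 2) g); [exact: cst_continuous | exact: cg].
have gK x : K x -> g x < 2^-1.
  by move=> /KD[k Dk fkx]; apply: le_lt_trans fkx; exact: ge_bigmin_seq.
have gU x : ~ U x -> g x = 1.
  move=> Ux; rewrite /g big_seq; apply: bigmin_eq_id => k Dk.
  have /set_mem Kk := DK k Dk.
  by rewrite (fP k Kk).2.
exists (exist _ u cu); split=> x hx /=; rewrite /u.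
  by apply/max_idPl; have := gK x hx; lra.
rewrite gU // (_ : 2 * 1 - 1 = 1 :> R); last by lra.
by apply/max_idPr; rewrite ler01.
Qed.

End Tychonoff.

Lemma finite_set_eventually_sub (T : choiceType) (L : nat -> set T) (F : set T) :
  (forall n m, (n <= m)%N -> L n `<=` L m) -> finite_set F ->
  (forall x, F x -> exists n, L n x) -> exists N, forall m, (N <= m)%N -> F `<=` L m.
Proof.
move=> Lmono /finite_fsetP[B ->] FL.
suff [N hN] : exists N, forall m, (N <= m)%N -> forall x, x \in (B : seq T) -> L m x.
  by exists N => m hm x xB; exact: hN m hm x xB.
have {}FL x : x \in (B : seq T) -> exists n, L n x by apply: FL.
elim: (B : seq T) FL => [|a s IH] FL; first by exists 0%N.
have [N1 h1] := IH (fun x xs => FL x (mem_behead (s := a :: s) xs)).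
have [n2 h2] := FL a (mem_head a s).
exists (maxn N1 n2) => m; rewrite geq_max => /andP[hN1 hn2] x.
by rewrite inE => /predU1P[->|xs]; [exact: Lmono h2 | exact: h1].
Qed.

Lemma finite_set_bounded (T : choiceType) (R : realType) (F : set T) (phi : T -> R) :
  finite_set F -> exists N : nat, forall x, F x -> phi x < N%:R.
Proof.
move=> finF.
have [|x _|N hN] := @finite_set_eventually_sub _ (fun n => [set x | phi x < n%:R]) F _ finF.
- by move=> n m nm x /= /lt_le_trans; apply; rewrite ler_nat.
- exists (Num.Def.archi_bound `|phi x|) => /=.
  exact: le_lt_trans (ler_norm _) (archi_boundP (normr_ge0 _)).
- by exists N => x /(hN N (leqnn N)).
Qed.

Section Covers.
Variable X : topologicalType.
Implicit Types (y : nat -> set X) (F K : set X).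

Lemma not_setT_point (V : set X) : V <> setT -> exists p, ~ V p.
Proof. by move/eqP/setTPn. Qed.

Lemma gamma_cover_omega (U : set (set X)) : gamma_cover U -> omega_cover U.
Proof.
move=> [infU coverU UT cofin]; split=> // F finF; apply: contrapT => nF; apply: infU.
by apply: sub_finite_set (cofin F finF) => V UV; split=> // FV; apply: nF; exists V.
Qed.

Lemma not_omega_cover_range y : (forall n, open (y n)) -> (forall n, y n <> setT) ->
  ~ omega_cover (range y) -> exists2 F, finite_set F & forall n, ~ F `<=` y n.
Proof.
move=> oy yT ny; apply: contrapT => nF; apply: ny.
have Fy F : finite_set F -> exists n, F `<=` y n.
  move=> finF; apply: contrapT => nFy; apply: nF; exists F => // n Fn.
  by apply: nFy; exists n.
split=> [|[n _ /yT]//|F /Fy[n Fn]]; last by exists (y n) => //; exists n.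
split=> [_ [n _ <-]//|x]; have [n xn] := Fy _ (finite_set1 x).
by exists (y n); [exists n | exact: xn].
Qed.

Lemma omega_cover_range_cofinal y : (forall n, y n <> setT) -> omega_cover (range y) ->
  forall F, finite_set F -> forall N, exists n, (N <= n)%N /\ F `<=` y n.
Proof.
move=> yT [_ _ omega] F finF N.
have /choice[p yp] : forall n, exists p, ~ y n p by move=> n; exact: not_setT_point.
have finFp : finite_set (F `|` p @` `I_N).
  by rewrite finite_setU; split=> //; apply: finite_image; exact: finite_II.
have [V [n _ <-] FpV] := omega _ finFp.
exists n; split; last by move=> x Fx; apply: FpV; left.
rewrite leqNgt; apply/negP => nN; apply: (yp n); apply: FpV; right; by exists n.
Qed.

Lemma not_gamma_cover_range y : (forall n, open (y n)) -> (forall n, y n <> setT) ->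
  ~ gamma_cover (range y) ->
  exists2 F, finite_set F & forall N, exists n, (N <= n)%N /\ ~ F `<=` y n.
Proof.
move=> oy yT ny; apply: contrapT => nF; apply: ny.
have Fy F : finite_set F -> exists N, forall n, (N <= n)%N -> F `<=` y n.
  move=> finF; apply: contrapT => nFy; apply: nF; exists F => // N.
  apply: contrapT => nN; apply: nFy; exists N => n Nn; apply: contrapT => nFn.
  by apply: nN; exists n.
have [x0 _] := not_setT_point (yT 0%N).
have [p yp] := partial_choice x0 (@not_setT_point).
split.
- move=> /(finite_image p) /Fy[N /(_ N (leqnn N)) /(_ (p (y N)))].
  by apply: contra_not (yp _ (yT N)) => /(_ _); apply; exists (y N) => //; exists N.
- split=> [_ [n _ <-]//|x]; have [N /(_ N (leqnn N)) xN] := Fy _ (finite_set1 x).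
  by exists (y N); [exists N | exact: xN].
- by move=> [n _ /yT].
- move=> F /Fy[N FN]; apply: sub_finite_set (finite_image y (finite_II N)).
  move=> V [[n _ <-] Fn]; exists n => //=; rewrite ltnNge; apply/negP => /FN.
  exact: Fn.
Qed.

Lemma compact_not_setT (K : set X) :
  ~ compact [set: X] -> compact K -> exists p, ~ K p.
Proof. by move=> ncX cK; apply: not_setT_point => KT; apply: ncX; rewrite -KT. Qed.

Lemma no_k_cover_compact (U : set (set X)) : compact [set: X] -> ~ k_cover U.
Proof. by move=> cX [_ UT /(_ _ cX)[V UV]]; rewrite subTset => VT; apply: UT; rewrite -VT. Qed.

Lemma N_KX_nbhds K : compact K -> K !=set0 -> N_KX (nbhds_of_set K).
Proof. by move=> cK K0; exists K. Qed.

Lemma N_KX_directed (E1 E2 : set (set X)) : N_KX E1 -> N_KX E2 ->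
  exists2 E, N_KX E & E `<=` E1 `&` E2.
Proof.
move=> [K1 [cK1 K10] <-] [K2 [cK2 _] <-].
exists (nbhds_of_set (K1 `|` K2)); first by apply: N_KX_nbhds; [exact: compactU|
  case: K10 => k ?; exists k; left].
by move=> U [oU [UT KU]]; split; split=> //; split=> // x ?; apply: KU; [left|right].
Qed.

Lemma N_KX_member (E : set (set X)) (U : set X) : N_KX E -> E U -> open U /\ U <> setT.
Proof. by move=> [K _ <-] [oU [UT _]]. Qed.

Lemma k_cover_meets_N_KX (A E : set (set X)) : k_cover A -> N_KX E -> A `&` E !=set0.
Proof.
move=> [[oA _] AT kA] [K [cK _] <-]; have [V AV KV] := kA K cK.
by exists V; split=> //; split; [exact: oA | split=> // VT; apply: AT; rewrite -VT].
Qed.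

Section Pointed.
Variable x0 : X.

Lemma compactU1 K : compact K -> compact (K `|` [set x0]).
Proof. by move=> cK; apply: compactU => //; exact: compact_set1. Qed.

Lemma N_KX_nbhdsU1 K : compact K -> N_KX (nbhds_of_set (K `|` [set x0])).
Proof. by move=> cK; apply: N_KX_nbhds; [exact: compactU1 | exists x0; right]. Qed.

Lemma N_KX_selector_k_cover (f : set (set X) -> set X) :
  (forall E, N_KX E -> E (f E)) -> k_cover (f @` @N_KX X).
Proof.
move=> fE.
have fP K : compact K -> K !=set0 -> [/\ open (f (nbhds_of_set K)),
    f (nbhds_of_set K) <> setT & K `<=` f (nbhds_of_set K)].
  by move=> cK K0; have [? [? ?]] := fE _ (N_KX_nbhds cK K0).
split.
- split=> [_ [E [K [cK K0] <-] <-]|x]; first by case: (fP K cK K0).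
  have x1 : [set x] !=set0 by exists x.
  exists (f (nbhds_of_set [set x])); first by exists (nbhds_of_set [set x]);
    [exact: N_KX_nbhds (@compact_set1 _ x) x1|].
  by case: (fP _ (@compact_set1 _ x) x1) => _ _; apply.
- by move=> [E [K [cK K0] <-]]; case: (fP K cK K0).
- move=> K cK; exists (f (nbhds_of_set (K `|` [set x0]))).
    by exists (nbhds_of_set (K `|` [set x0])) => //; exact: N_KX_nbhdsU1.
  have [_ _ KU] := fP _ (compactU1 cK) (ex_intro _ x0 (or_intror erefl)).
  by move=> x Kx; apply: KU; left.
Qed.

Lemma G_NK_notOmega_G_K_Omega_dual : games_dual (G_NK_notOmega X) (G_K_Omega X).
Proof. exact: G1neg_G1_dual set0 _ _ _ k_cover_meets_N_KX N_KX_selector_k_cover. Qed.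

Lemma G_NK_notGamma_G_K_Gamma_dual : games_dual (G_NK_notGamma X) (G_K_Gamma X).
Proof. exact: G1neg_G1_dual set0 _ _ _ k_cover_meets_N_KX N_KX_selector_k_cover. Qed.

Lemma sigma_compact_increasing : sigma_compact X -> exists L : nat -> set X,
  [/\ forall n, compact (L n), forall n, L n !=set0,
      forall n m, (n <= m)%N -> L n `<=` L m & forall x, exists n, L n x].
Proof.
move=> [K [cK KX]].
pose fix L n := if n is m.+1 then L m `|` K n else K 0%N `|` [set x0].
exists L; split.
- by elim=> [|n IH] /=; [exact: compactU1 | exact: compactU].
- by elim=> [|n [y Ly]] /=; [exists x0; right | exists y; left].
- move=> n m /subnK <-; elim: (m - n)%N => [//|k IH] y /IH Ly.
  by rewrite addSn; left.
- move=> x; have : (\bigcup_n K n) x by rewrite KX.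
  by move=> [[|n] _ Knx]; [exists 0%N; left | exists n.+1; right].
Qed.

Lemma sigma_compact_I_wins_pre : sigma_compact X -> I_wins_pre (G_NK_notOmega X).
Proof.
move=> /sigma_compact_increasing[L [cL L0 Lmono LX]].
exists (fun n => nbhds_of_set (L n)); split=> [n|y yL /=]; first exact: N_KX_nbhds.
apply; split.
- split=> [_ [n _ <-]|x]; first by case: (yL n).
  have [n Lnx] := LX x; exists (y n); first by exists n.
  by case: (yL n) => _ [_]; apply.
- by move=> [n _ ynT]; case: (yL n) => _ [].
- move=> F finF; have [N LN] := finite_set_eventually_sub Lmono finF (fun x _ => LX x).
  exists (y N); first by exists N.
  by move=> x /(LN N (leqnn N)); case: (yL N) => _ [_]; apply.
Qed.

End Pointed.

(* Playing against the constant answer [~` [set x]] shows that every point lies in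
   one of the compact sets underlying One's predetermined moves. *)
Lemma I_wins_pre_sigma_compact : accessible_space X ->
  I_wins_pre (G_NK_notOmega X) -> sigma_compact X.
Proof.
move=> T1 [e [eN ew]].
have /choice[K KP] n : exists K, [/\ compact K, K !=set0 & e n = nbhds_of_set K].
  by have [K [? ?] <-] := eN n; exists K.
exists K; split=> [n|]; first by case: (KP n).
apply/seteqP; split=> // x _; apply: contrapT => nKx.
apply: (ew (fun=> ~` [set x])) => [n|/= [[_ cover] _ _]]; last first.
  by have [V [n _ <-]] := cover x; apply.
case: (KP n) => _ _ ->; split; first exact/closed_openC/(@accessible_closed_set1 X T1 x).
split=> [xT|y Kny yx].
  by have /(_ erefl) : (~` [set x]) x by rewrite xT.
by apply: nKx; exists n => //; rewrite -yx.
Qed.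

Lemma G_NK_notOmega_notGamma_equiv_for_One :
  equiv_for_One (G_NK_notOmega X) (G_NK_notGamma X).
Proof.
have extract (y : nat -> set X) : (forall n, exists2 E, N_KX E & E (y n)) ->
    ~ gamma_cover (range y) -> exists phi : nat -> nat,
      (forall i, (phi i < phi i.+1)%N) /\ ~ omega_cover (range (y \o phi)).
  move=> yE ng.
  have oy n : open (y n) by have [E [K _ <-] [?]] := yE n.
  have yT n : y n <> setT by have [E [K _ <-] [_ []]] := yE n.
  have [F finF Fy] := not_gamma_cover_range oy yT ng.
  have [phi [phiS Fphi]] := increasing_extraction Fy.
  by exists phi; split=> // -[_ _ /(_ F finF)[V [i _ <-]]]; exact: Fphi.
have [s1 s2] := @I_wins_of_subsequences _ _ N_KX_directed
  (fun y => ~ omega_cover (range y)) (fun y => ~ gamma_cover (range y)) extract.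
have [m1 m2] := @I_wins_mono _ (@N_KX X) (fun y => ~ omega_cover (range y))
  (fun y => ~ gamma_cover (range y)) (fun y ny g => ny (gamma_cover_omega g)).
by split; split.
Qed.

End Covers.

Section CpCk.
Variables (R : realType) (X : topologicalType).
Local Notation C := (CX R X).
Local Notation Cp := (Cp_open R X).
Local Notation Ck := (Ck_open R X).
Local Notation zero := (CX0 R X).
Implicit Types (f g h : C) (S : set C).

Lemma clos_CpP S f : clos Cp S f <->
  (forall F, finite_set F -> forall e : R, 0 < e -> exists2 g, S g & basic_nbhd f F e g).
Proof. exact: gen_closP. Qed.

Lemma clos_CkP S f : clos Ck S f <->
  (forall K, compact K -> forall e : R, 0 < e -> exists2 g, S g & basic_nbhd f K e g).
Proof. exact: gen_closP. Qed.

Lemma basic_nbhd0 A (e : R) f : basic_nbhd zero A e f <-> forall x, A x -> `|sval f x| < e.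
Proof. by split=> h x /h; rewrite /= sub0r normrN. Qed.

Lemma basic_nbhd_half_inv_succ n A f x : A x ->
  basic_nbhd (cst_CX X (n.+1%:R^-1 / 2)) A (n.+1%:R^-1 / 2) f ->
  0 < sval f x < n.+1%:R^-1.
Proof.
move=> Ax /(_ x Ax); rewrite ltr_distlC /=; set t := n.+1%:R^-1 => /andP[? ?].
by apply/andP; split; lra.
Qed.

Lemma clos_Cp_omega_cover (f : nat -> C) (y : nat -> set X) :
  (forall n, y n <> setT) -> omega_cover (range y) ->
  (forall n x, y n x -> `|sval (f n) x| < n.+1%:R^-1) -> clos Cp (range f) zero.
Proof.
move=> yT omega fy; apply/clos_CpP => F finF e e0.
have [N hN] := inv_succ_lt e0.
have [n [Nn Fn]] := omega_cover_range_cofinal yT omega finF N.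
exists (f n); first by exists n.
by apply/basic_nbhd0 => x /Fn ynx; exact: lt_trans (fy n x ynx) (hN n Nn).
Qed.

Lemma nbhd_open_Ck0 (W : set C) : nbhd_open Ck zero W ->
  exists K, compact K /\ exists2 e : R, 0 < e & basic_nbhd zero K e `<=` W.
Proof. by move=> [oW W0]; have [K [cK eW]] := oW _ W0; exists K. Qed.

(* The finitely many terms of [y] before [N] that differ from [h] can be
   excluded from a basic neighbourhood of [h] one by one. *)
Lemma basic_nbhd_isolate (y : nat -> C) h N F (e : R) : finite_set F -> 0 < e ->
  (forall n, (N <= n)%N -> basic_nbhd h F e (y n) -> y n = h) ->
  exists F', finite_set F' /\ exists2 e' : R, 0 < e' &
     forall n, basic_nbhd h F' e' (y n) -> y n = h.
Proof.
elim: N F e => [|N IH] F e finF e0 yh.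
  by exists F; split=> //; exists e => // n; apply: yh.
have [yNh|yNh] := pselect (y N = h).
  by apply: (IH F e) => // n; rewrite leq_eqVlt => /orP[/eqP <-|]; [|exact: yh].
have [x yNx] : exists x, sval (y N) x <> sval h x.
  apply: contrapT => yNx; apply: yNh; apply: CX_ext => x.
  by apply: contrapT => ?; apply: yNx; exists x.
have d0 : 0 < `|sval (y N) x - sval h x| by rewrite normr_gt0 subr_eq0; exact/eqP.
apply: (IH (F `|` [set x]) (Num.min e `|sval (y N) x - sval h x|)).
- by rewrite finite_setU; split=> //; exact: finite_set1.
- by rewrite lt_min e0 d0.
- move=> n; rewrite leq_eqVlt => /orP[/eqP <-|Nn] yn.
    have := yn x (or_intror erefl); rewrite distrC => /lt_le_trans.
    by move=> /(_ `|sval (y N) x - sval h x|); rewrite ge_min lexx orbT ltxx => /(_ isT).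
  apply: yh => // z Fz; apply: lt_le_trans (yn z (or_introl Fz)) _.
  by rewrite ge_min lexx.
Qed.

Lemma closed_discrete_range (y : nat -> C) :
  (forall h, exists F, finite_set F /\ exists e : R, 0 < e /\
     exists N, forall n, (N <= n)%N -> ~ basic_nbhd h F e (y n)) ->
  closed_discrete Cp (range y).
Proof.
move=> far.
have isolate h : exists F', finite_set F' /\ exists2 e' : R, 0 < e' &
    forall n, basic_nbhd h F' e' (y n) -> y n = h.
  have [F [finF [e [e0 [N yN]]]]] := far h.
  by apply: (basic_nbhd_isolate finF e0 (N := N)) => n Nn /(yN n Nn).
split=> [h /clos_CpP hy|h [m _ ymh]].
  have [F' [finF' [e' e'0 yh]]] := isolate h.
  by have [g [n _ <-] /yh yn] := hy F' finF' e' e'0; exists n.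
have [F' [finF' [e' e'0 yh]]] := isolate h.
exists (gen_interior (@finite_set X) (basic_nbhd h F' e')).
split; first exact: gen_open_interior.
apply/seteqP; split=> [g [/gen_interior_sub hg [n _ yng]]|g ->].
  by rewrite -yng; apply: yh; rewrite yng.
by split; [exact: gen_interior_basic | exists m].
Qed.

End CpCk.

Section Translations.
Variables (R : realType) (X : topologicalType).
Hypothesis hX : tychonoff_space R X.
Variable x0 : X.
Local Notation C := (CX R X).
Local Notation Cp := (Cp_open R X).
Local Notation Ck := (Ck_open R X).
Local Notation zero := (CX0 R X).

(* The answer to [U] agrees with [g] on [K] and is [>= n] off [U]; along a
   finite set missed by every [U n], the answers leave every basic
   neighbourhood, so they form a closed discrete set. *)
Lemma le_II_NK_Tk : le_II (G_NK_notOmega X) (G_Tk_CDp R X).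
Proof.
apply: (@le_II_of_translation (G_NK_notOmega X) (G_Tk_CDp R X) zero
  (fun _ W E => exists g K, [/\ compact K, E = nbhds_of_set K &
     exists2 e : R, 0 < e & basic_nbhd g K e `<=` W])
  (fun n _ U f => forall x, ~ U x -> n%:R <= sval f x)).
- move=> n W [oW [g Wg]]; have [K [cK [e e0 gW]]] := oW g Wg.
  exists (nbhds_of_set (K `|` [set x0])); first exact: (N_KX_nbhdsU1 x0 cK).
  exists g, (K `|` [set x0]); split=> //; first exact: (compactU1 cK).
  by exists e => // f /(basic_nbhdS (@subsetUl _ K _) (lexx e)) /gW.
- move=> n W E U _ [g [K [cK -> [e e0 gW]]]] [oU [_ KU]].
  have [u [u0 u1]] := compact_open_separator hX cK oU KU.
  pose f y := sval g y + sval u y * (n%:R + `|sval g y|).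
  have cf : continuous f.
    move=> y; apply: (@continuousD _ _ _ (sval g)); first exact: (proj2_sig g y).
    apply: (@continuousM _ _ (sval u)); first exact: (proj2_sig u y).
    apply: (@continuousD _ _ _ (fun=> (n%:R : R))); first exact: cst_continuous.
    by apply: continuous_comp; [exact: (proj2_sig g y) | exact: norm_continuous].
  exists (exist _ f cf); first by apply: gW => x Kx; rewrite /= /f u0 // mul0r addr0 subrr normr0.
  move=> x Ux; rewrite /= /f u1 // mul1r.
  by have := ler_norm (- sval g x); rewrite normrN; lra.
- move=> W E U f _ EN _ EU _ fU /= nomega.
  have oU n : open (U n) by case: (N_KX_member (EN n) (EU n)).
  have UT n : U n <> setT by case: (N_KX_member (EN n) (EU n)).
  have [F finF FU] := not_omega_cover_range oU UT nomega.
  apply: closed_discrete_range => h; exists F; split=> //; exists 1; split=> //.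
  have [N hN] := finite_set_bounded (fun x => `|sval h x| + 1) finF.
  exists N => n Nn hf; have [x Fx nUx] := (existsPNP _ _).2 (FU n).
  have := hf x Fx; rewrite ltr_distlC => /andP[_].
  have := fU n x nUx; have := hN x Fx; have : (N%:R : R) <= n%:R by rewrite ler_nat.
  by have := ler_norm (sval h x); lra.
Qed.

Lemma le_II_NK_Nk0 : le_II (G_NK_notOmega X) (G_Nk0_notOmegap R X).
Proof.
apply: (@le_II_of_translation (G_NK_notOmega X) (G_Nk0_notOmegap R X) zero
  (fun _ W E => exists K, [/\ compact K, E = nbhds_of_set K &
     exists2 e : R, 0 < e & basic_nbhd zero K e `<=` W])
  (fun _ _ U u => forall x, ~ U x -> sval u x = 1)).
- move=> n W /nbhd_open_Ck0[K [cK [e e0 KW]]].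
  exists (nbhds_of_set (K `|` [set x0])); first exact: (N_KX_nbhdsU1 x0 cK).
  exists (K `|` [set x0]); split=> //; first exact: (compactU1 cK).
  by exists e => // f /(basic_nbhdS (@subsetUl _ K _) (lexx e)) /KW.
- move=> n W E U _ [K [cK -> [e e0 KW]]] [oU [_ KU]].
  have [u [u0 u1]] := compact_open_separator hX cK oU KU.
  by exists u => //; apply: KW => x Kx; rewrite /= u0 // subrr normr0.
- move=> W E U u _ EN _ EU _ uU /= nomega clos0.
  have oU n : open (U n) by case: (N_KX_member (EN n) (EU n)).
  have UT n : U n <> setT by case: (N_KX_member (EN n) (EU n)).
  have [F finF FU] := not_omega_cover_range oU UT nomega.
  have [_ [n _ <-] un] := (clos_CpP _ _).1 clos0 F finF 1 ltr01.
  have [x Fx nUx] := (existsPNP _ _).2 (FU n).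
  by have := un x Fx; rewrite /= uU // sub0r normrN normr1 ltxx.
Qed.

Definition small_cover (S : set C) (r : R) : set (set X) :=
  [set U | U <> setT /\ exists2 s, S s & open U /\ forall x, U x -> `|sval s x| < r].

Section NonCompact.
Hypothesis ncX : ~ compact [set: X].

Lemma small_open_nbhd (K : set X) (f : C) (r : R) : compact K ->
  (forall x, K x -> `|sval f x| < r) ->
  exists U, [/\ nbhds_of_set K U, U <> setT & forall x, U x -> `|sval f x| < r].
Proof.
move=> cK fK; have [p nKp] := compact_not_setT ncX cK.
have nUp : ~ ([set x | `|sval f x| < r] `&` ~` [set p]) p by case=> _; apply.
exists ([set x | `|sval f x| < r] `&` ~` [set p]); split=> [|UT|x []//].
- split; first by apply: openI; [exact: open_norm_lt |
    exact: (closed_openC (@tychonoff_closed1 _ _ hX p))].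
  split=> [UT|x Kx]; first by apply: nUp; rewrite UT.
  by split=> [|xp]; [exact: fK | apply: nKp; rewrite -xp].
- by apply: nUp; rewrite UT.
Qed.

Lemma le_II_Nk0_NK : le_II (G_Nk0_notOmegap R X) (G_NK_notOmega X).
Proof.
apply: (@le_II_of_translation (G_Nk0_notOmegap R X) (G_NK_notOmega X) set0
  (fun n E W => exists K, [/\ compact K, E = nbhds_of_set K &
     W = gen_interior (@compact X) (basic_nbhd zero K n.+1%:R^-1)])
  (fun n _ f U => U <> setT /\ forall x, U x -> `|sval f x| < n.+1%:R^-1)).
- move=> n _ [K [cK _] <-].
  exists (gen_interior (@compact X) (basic_nbhd zero K n.+1%:R^-1)); last by exists K.
  exact: gen_nbhd_interior cK (inv_succ_gt0 _ _).
- move=> n E W f _ [K [cK -> ->]] /gen_interior_sub /basic_nbhd0 fK.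
  by have [U [KU UT fU]] := small_open_nbhd cK fK; exists U.
- move=> E W f U _ _ _ _ _ fU /= nclos omega; apply: nclos.
  exact: clos_Cp_omega_cover (fun n => (fU n).1) omega (fun n => (fU n).2).
Qed.

(* The answers are positive on [K] and small on [U]; if the [U n] form an
   omega-cover, [0] is a limit point outside the range of the answers. *)
Lemma le_II_Tk_NK : le_II (G_Tk_CDp R X) (G_NK_notOmega X).
Proof.
pose c n : R := n.+1%:R^-1 / 2.
have c0 n : 0 < c n by rewrite divr_gt0 ?inv_succ_gt0.
apply: (@le_II_of_translation (G_Tk_CDp R X) (G_NK_notOmega X) set0
  (fun n E W => exists K, [/\ compact K, K !=set0, E = nbhds_of_set K &
     W = gen_interior (@compact X) (basic_nbhd (cst_CX X (c n)) K (c n))])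
  (fun n _ f U => [/\ U <> setT, forall x, U x -> `|sval f x| < n.+1%:R^-1 &
     exists x, 0 < sval f x])).
- move=> n _ [K [cK K0] <-].
  exists (gen_interior (@compact X) (basic_nbhd (cst_CX X (c n)) K (c n))); last by exists K.
  have [oW Wc] := gen_nbhd_interior (cst_CX X (c n)) cK (c0 n).
  by split; last exists (cst_CX X (c n)).
- move=> n E W f _ [K [cK [k Kk] -> ->]] /gen_interior_sub fK.
  have fpos x : K x -> 0 < sval f x < n.+1%:R^-1.
    by move=> Kx; exact: basic_nbhd_half_inv_succ Kx fK.
  have fsmall x : K x -> `|sval f x| < n.+1%:R^-1.
    by move=> /fpos /andP[f0 f1]; rewrite gtr0_norm.
  have [U [KU UT fU]] := small_open_nbhd cK fsmall.
  by exists U => //; split=> //; exists k; case/andP: (fpos k Kk).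
- move=> E W f U _ _ _ _ _ fU /= [fclosed _] omega.
  have UT n : U n <> setT by case: (fU n).
  have fUn n x : U n x -> `|sval (f n) x| < n.+1%:R^-1 by case: (fU n) => _ + _; apply.
  have /fclosed[m _ fm0] := clos_Cp_omega_cover UT omega fUn.
  have [_ _ [x]] := fU m.
  by rewrite fm0 /= ltxx.
Qed.

Lemma small_cover_k_cover (S : set C) (r : R) : clos Ck S zero -> 0 < r ->
  k_cover (small_cover S r).
Proof.
move=> /clos_CkP S0 r0.
have cover K : compact K -> exists2 U, small_cover S r U & K `<=` U.
  move=> cK; have [s Ss /basic_nbhd0 sK] := S0 K cK r r0.
  have [U [[oU [_ KU]] UT sU]] := small_open_nbhd cK sK.
  by exists U => //; split=> //; exists s.
split=> [|[]//|//]; split=> [U [_ [s _ []//]]|x].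
by have [U SU /(_ x erefl)] := cover _ (@compact_set1 _ x); exists U.
Qed.

Lemma le_II_K_Omegap (M : set (set C)) : (forall S, M S -> clos Ck S zero) ->
  le_II (G_K_Omega X) (G1 M (Omega_pt Cp zero)).
Proof.
move=> M0.
apply: (@le_II_of_translation (G_K_Omega X) (G1 M (Omega_pt Cp zero)) zero
  (fun n S V => V = small_cover S n.+1%:R^-1)
  (fun n _ U s => forall x, U x -> `|sval s x| < n.+1%:R^-1)).
- move=> n S MS; exists (small_cover S n.+1%:R^-1) => //.
  exact: small_cover_k_cover (M0 S MS) (inv_succ_gt0 _ _).
- by move=> n S _ U _ -> [_ [s Ss [_ sU]]]; exists s.
- move=> S V U s _ Vk _ VU _ sU /= omega.
  have UT n : U n <> setT by case: (Vk n) => _ VT _ UT; apply: VT; rewrite -UT.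
  exact: clos_Cp_omega_cover UT omega sU.
Qed.

End NonCompact.

Definition one_off_cover (U : set (set X)) : set C :=
  [set s | exists2 V, U V & forall x, ~ V x -> sval s x = 1].

Lemma one_off_cover_dense (U : set (set X)) : k_cover U -> dense_sets Ck (one_off_cover U).
Proof.
move=> [[oU _] _ kU] g; apply/clos_CkP => K cK e e0.
have [V UV KV] := kU K cK.
have [u [u0 u1]] := compact_open_separator hX cK (oU V UV) KV.
pose s y := sval g y * (1 - sval u y) + sval u y.
have cs : continuous s.
  move=> y; apply: (@continuousD _ _ _ (fun y => sval g y * (1 - sval u y)));
    last exact: (proj2_sig u y).
  apply: (@continuousM _ _ (sval g)); first exact: (proj2_sig g y).
  apply: (@continuousD _ _ _ (fun=> (1 : R))); first exact: cst_continuous.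
  by apply: continuousN; exact: (proj2_sig u y).
exists (exist _ s cs).
  by exists V => // x Vx; rewrite /= /s u1 // subrr mulr0 add0r.
by move=> x Kx; rewrite /= /s u0 // subr0 mulr1 addr0 subrr normr0.
Qed.

Lemma le_II_Omegap_K (M : set (set C)) : (forall U, k_cover U -> M (one_off_cover U)) ->
  le_II (G1 M (Omega_pt Cp zero)) (G_K_Omega X).
Proof.
move=> Mone.
apply: (@le_II_of_translation (G1 M (Omega_pt Cp zero)) (G_K_Omega X) set0
  (fun _ U S => S = one_off_cover U)
  (fun _ _ s V => forall x, ~ V x -> sval s x = 1)).
- by move=> n U kU; exists (one_off_cover U) => //; exact: Mone.
- by move=> n U S s _ -> [V UV sV]; exists V.
- move=> U S s V Uk _ _ _ UV sV /= /clos_CpP clos0.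
  have Vfin F : finite_set F -> exists n, F `<=` V n.
    move=> finF; have [_ [n _ <-] sn] := clos0 F finF 1 ltr01.
    exists n => x Fx; apply: contrapT => nVx.
    by have := sn x Fx; rewrite /= sV // sub0r normrN normr1 ltxx.
  split.
  + split=> [_ [n _ <-]|x]; first by case: (Uk n) => -[oU _] _ _; exact: oU.
    by have [n /(_ x erefl) Vx] := Vfin _ (finite_set1 x); exists (V n); first exists n.
  + by move=> [n _ VT]; case: (Uk n) => _ UT _; apply: UT; rewrite -VT.
  + by move=> F /Vfin[n FV]; exists (V n) => //; exists n.
Qed.

End Translations.

Section CompactCase.
Variables (R : realType) (X : topologicalType).
Hypothesis cX : compact [set: X].
Local Notation C := (CX R X).
Local Notation Cp := (Cp_open R X).
Local Notation Ck := (Ck_open R X).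
Local Notation zero := (CX0 R X).

Lemma clos_Cp_uniform (f : nat -> C) :
  (forall n x, `|sval (f n) x| < n.+1%:R^-1) -> clos Cp (range f) zero.
Proof.
move=> fn; apply/clos_CpP => F _ e e0; have [N hN] := inv_succ_lt e0.
exists (f N); first by exists N.
by apply/basic_nbhd0 => x _; exact: lt_trans (fn N x) (hN N (leqnn N)).
Qed.

Lemma I_wins_pre_Nk0_compact : I_wins_pre (G_Nk0_notOmegap R X).
Proof.
exists (fun n => gen_interior (@compact X) (basic_nbhd zero setT n.+1%:R^-1)).
split=> [n|f fn /=]; first exact: gen_nbhd_interior cX (inv_succ_gt0 _ _).
apply; apply: clos_Cp_uniform => n x.
by have /basic_nbhd0 := gen_interior_sub (fn n); apply.
Qed.

Lemma I_wins_pre_Tk_compact (x0 : X) : I_wins_pre (G_Tk_CDp R X).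
Proof.
pose c n : R := n.+1%:R^-1 / 2.
have c0 n : 0 < c n by rewrite divr_gt0 ?inv_succ_gt0.
exists (fun n => gen_interior (@compact X) (basic_nbhd (cst_CX X (c n)) setT (c n))).
split=> [n|f fn /= [fclosed _]].
  have [oW Wc] := gen_nbhd_interior (cst_CX X (c n)) cX (c0 n).
  by split; last exists (cst_CX X (c n)).
have fpos n x : 0 < sval (f n) x < n.+1%:R^-1.
  exact: (basic_nbhd_half_inv_succ (A := setT) I (gen_interior_sub (fn n))).
have /fclosed[m _ fm0] : clos Cp (range f) zero.
  by apply: clos_Cp_uniform => n x; have /andP[? ?] := fpos n x; rewrite gtr0_norm.
by have /andP[] := fpos m x0; rewrite fm0 /= ltxx.
Qed.

Lemma II_wins_mark_K_compact : II_wins_mark (G_K_Omega X).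
Proof.
exists (fun _ _ => set0); split=> [E n /(no_k_cover_compact cX)//|e].
by move=> /(_ 0%N) /(no_k_cover_compact cX).
Qed.

Lemma II_wins_mark_Omegap_compact (M : set (set C)) :
  (forall S, M S -> clos Ck S zero) -> II_wins_mark (G1 M (Omega_pt Cp zero)).
Proof.
move=> M0.
have pick_ex (Sn : set C * nat) : M Sn.1 ->
    exists s, Sn.1 s /\ forall x, `|sval s x| < Sn.2.+1%:R^-1.
  move=> /M0 /clos_CkP /(_ _ cX _ (inv_succ_gt0 _ Sn.2))[s Ss /basic_nbhd0 sX].
  by exists s; split=> // x; exact: sX.
have [t tP] := partial_choice zero pick_ex.
exists (fun S n => t (S, n)); split=> [S n /(tP (S, n))[]//|e Me /=].
by apply: clos_Cp_uniform => n x; case: (tP (e n, n) (Me n)) => _; apply.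
Qed.

End CompactCase.

Lemma finite_family_lower_bound (R : realDomainType) n (r : 'I_n -> R) :
  (forall i, 0 < r i) -> exists2 d : R, 0 < d & forall i, d <= r i.
Proof.
elim: n r => [|n IH] r r0; first by exists 1 => // -[].
have [d d0 dr] := IH (fun i => r (lift ord0 i)) (fun i => r0 _).
exists (Num.min d (r ord0)); first by rewrite lt_min d0 r0.
by move=> i; case: (unliftP ord0 i) => [j ->|->]; rewrite ge_min ?dr ?lexx ?orbT.
Qed.

Section Cofinality.
Variables (R : realType) (X : topologicalType).
Hypothesis hX : tychonoff_space R X.
Variable x0 : X.
Local Notation C := (CX R X).
Local Notation Cp := (Cp_open R X).
Local Notation Ck := (Ck_open R X).
Local Notation zero := (CX0 R X).

Lemma sigma_compact_cofinal : sigma_compact X ->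
  exists e : nat -> set C, cofinal_fam e (nbhd_open Ck zero) (nbhd_open Cp zero).
Proof.
move=> /(sigma_compact_increasing x0)[L [cL _ Lmono LX]].
exists (fun n => gen_interior (@compact X) (basic_nbhd zero (L n) n.+1%:R^-1)).
split=> [n|V [oV V0]]; first exact: gen_nbhd_interior (cL n) (inv_succ_gt0 _ _).
have [F [finF [e e0 FV]]] := oV zero V0.
have [N1 FL] := finite_set_eventually_sub Lmono finF (fun x _ => LX x).
have [N2 hN2] := inv_succ_lt e0.
exists (maxn N1 N2) => f /gen_interior_sub f0; apply: FV.
apply: basic_nbhdS f0; first exact: FL _ (leq_maxl N1 N2).
exact/ltW/hN2/leq_maxr.
Qed.

(* Each [e i] contains the constant [r i / 2], where [r i] is a radius of
   [e i]; so [[0; {x0}, d]] contains no [e i] once [d <= r i / 2] for all [i]. *)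
Lemma no_finite_cofinal n (e : 'I_n -> set C) :
  ~ cofinal_fam e (nbhd_open Ck zero) (nbhd_open Cp zero).
Proof.
move=> [eN cof].
have /choice[r rP] (i : 'I_n) :
    exists r : R, 0 < r /\ exists K, basic_nbhd zero K r `<=` e i.
  by have [K [_ [r r0 Ke]]] := nbhd_open_Ck0 (eN i); exists r; split=> //; exists K.
have [d d0 dr] := finite_family_lower_bound (fun i => divr_gt0 (rP i).1 (ltr0n R 2)).
have [V0 V00] := gen_nbhd_interior zero (finite_set1 x0) d0.
have [i eV] := cof _ (conj V0 V00).
have [r0 [K Ke]] := rP i.
have /eV/gen_interior_sub/(_ x0 erefl) : e i (cst_CX X (r i / 2)).
  by apply: Ke; apply/basic_nbhd0 => x _ /=; rewrite ger0_norm; lra.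
by rewrite /= sub0r normrN ger0_norm; [have := dr i; lra | lra].
Qed.

(* If [x] escaped every compact set [K n] underlying the cofinal family, a
   function vanishing on [K n] and equal to [1] at [x] would be in [e n] but
   not in [[0; {x}, 1]]. *)
Lemma cofinal_sigma_compact (e : nat -> set C) :
  cofinal_fam e (nbhd_open Ck zero) (nbhd_open Cp zero) -> sigma_compact X.
Proof.
move=> [eN cof].
have /choice[K KP] (n : nat) : exists K, compact K /\
    exists2 d : R, 0 < d & basic_nbhd zero K d `<=` e n.
  exact: nbhd_open_Ck0.
exists K; split=> [n|]; first by case: (KP n).
apply/seteqP; split=> // x _; apply: contrapT => nKx.
have [Vx Vx0] := gen_nbhd_interior zero (finite_set1 x) ltr01.
have [n eV] := cof _ (conj Vx Vx0).
have [cK [d d0 Ke]] := KP n.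
have KU : K n `<=` ~` [set x] by move=> y Ky yx; apply: nKx; exists n => //; rewrite -yx.
have [u [u0 u1]] :=
  compact_open_separator hX cK (closed_openC (@tychonoff_closed1 _ _ hX x)) KU.
have /eV/gen_interior_sub/(_ x erefl) : e n u.
  by apply: Ke; apply/basic_nbhd0 => y Ky; rewrite u0 // normr0.
by rewrite /= u1 ?sub0r ?normrN ?normr1 ?ltxx //; apply.
Qed.

Lemma sigma_compact_cof_eq_omega : sigma_compact X <->
  cof_eq_omega (nbhd_open Ck zero) (nbhd_open Cp zero).
Proof.
split=> [/sigma_compact_cofinal ecof|[[e ecof] _]]; last exact: cofinal_sigma_compact ecof.
by split=> // n; exact: no_finite_cofinal.
Qed.

End Cofinality.

Section OneCp.
Variables (R : realType) (X : topologicalType).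
Local Notation C := (CX R X).
Local Notation Cp := (Cp_open R X).
Local Notation Ck := (Ck_open R X).
Local Notation zero := (CX0 R X).

Lemma G_Nk0_notOmegap_notGammap_equiv_for_One :
  equiv_for_One (G_Nk0_notOmegap R X) (G_Nk0_notGammap R X).
Proof.
have directed (W1 W2 : set C) : nbhd_open Ck zero W1 -> nbhd_open Ck zero W2 ->
    exists2 W, nbhd_open Ck zero W & W `<=` W1 `&` W2.
  move=> [oW1 W10] [oW2 W20]; exists (W1 `&` W2) => //.
  by split; [exact: gen_openI (@compactU X) oW1 oW2 | split].
have extract (f : nat -> C) : (forall n, exists2 W, nbhd_open Ck zero W & W (f n)) ->
    ~ converges_to Cp f zero -> exists phi : nat -> nat,
      (forall i, (phi i < phi i.+1)%N) /\ ~ clos Cp (range (f \o phi)) zero.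
  move=> _ nconv.
  have [U [oU U0 Uf]] : exists U, [/\ Cp U, U zero &
      forall N, exists n, (N <= n)%N /\ ~ U (f n)].
    apply: contrapT => nU; apply: nconv => U oU U0; apply: contrapT => nN.
    apply: nU; exists U; split=> // N; apply: contrapT => nn; apply: nN; exists N.
    by move=> n Nn; apply: contrapT => nUn; apply: nn; exists n.
  have [phi [phiS Uphi]] := increasing_extraction Uf.
  exists phi; split=> // clos0; have [g [Ug [i _ gi]]] := clos0 U oU U0.
  by apply: (Uphi i); rewrite -gi in Ug.
have [s1 s2] := @I_wins_of_subsequences _ _ directed
  (fun f => ~ clos Cp (range f) zero) (fun f => ~ converges_to Cp f zero) extract.
have conv_clos f : converges_to Cp f zero -> clos Cp (range f) zero.
  move=> conv U oU U0; have [N /(_ N (leqnn N)) UfN] := conv U oU U0.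
  by exists (f N); split=> //; exists N.
have [m1 m2] := @I_wins_mono _ (nbhd_open Ck zero)
  (fun f => ~ clos Cp (range f) zero) (fun f => ~ converges_to Cp f zero)
  (fun f nclos conv => nclos (conv_clos f conv)).
by split; split.
Qed.

End OneCp.

Section Equivalences.
Variables (R : realType) (X : topologicalType).
Hypothesis hX : tychonoff_space R X.
Variable x0 : X.
Local Notation Ck := (Ck_open R X).
Local Notation zero := (CX0 R X).

Lemma games_equiv_NK_Nk0_Tk :
  games_equiv (G_NK_notOmega X) (G_Nk0_notOmegap R X) /\
  games_equiv (G_NK_notOmega X) (G_Tk_CDp R X).
Proof.
have [cX|ncX] := pselect (compact [set: X]).
  have IA : I_wins_pre (G_NK_notOmega X).
    by apply: (sigma_compact_I_wins_pre x0); exists (fun=> setT); split=> //; rewrite bigcup_const.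
  split; apply: games_equiv_I_wins_pre IA _; first exact: I_wins_pre_Nk0_compact.
  exact: I_wins_pre_Tk_compact x0.
split; split.
- exact: le_II_NK_Nk0 hX x0.
- exact: le_II_Nk0_NK hX ncX.
- exact: le_II_NK_Tk hX x0.
- exact: le_II_Tk_NK hX ncX.
Qed.

Lemma games_equiv_K_Omegak0_Dk :
  games_equiv (G_K_Omega X) (G_Omegak0_Omegap R X) /\
  games_equiv (G_K_Omega X) (G_Dk_Omegap R X).
Proof.
have one_off_clos U : k_cover U -> clos Ck (one_off_cover U) zero.
  by move=> kU; apply: (one_off_cover_dense hX kU).
have [cX|ncX] := pselect (compact [set: X]).
  split; apply: games_equiv_II_wins_mark (II_wins_mark_K_compact cX) _;
    apply: (II_wins_mark_Omegap_compact cX) => // S dS; exact: dS zero.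
split; split.
- by apply: (le_II_K_Omegap hX ncX) => S.
- exact: le_II_Omegap_K one_off_clos.
- by apply: (le_II_K_Omegap hX ncX) => S dS; exact: dS zero.
- by apply: le_II_Omegap_K => U /(one_off_cover_dense hX).
Qed.

End Equivalences.
Theorem mainTheorem2 (R : realType) (X : topologicalType)
  (hX : tychonoff_space R X) (hne : [set: X] !=set0) :
  (* (i) *)
  [/\ games_equiv (G_NK_notOmega X) (G_Nk0_notOmegap R X),
      games_equiv (G_NK_notOmega X) (G_Tk_CDp R X) &
      games_equiv (G_Nk0_notOmegap R X) (G_Tk_CDp R X)] /\
  (* (ii) *)
  [/\ games_equiv (G_K_Omega X) (G_Omegak0_Omegap R X),
      games_equiv (G_K_Omega X) (G_Dk_Omegap R X) &
      games_equiv (G_Omegak0_Omegap R X) (G_Dk_Omegap R X)] /\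
  (* (iii) *)
  (forall G H,
     (G = G_NK_notOmega X \/ G = G_Nk0_notOmegap R X \/ G = G_Tk_CDp R X) ->
     (H = G_K_Omega X \/ H = G_Omegak0_Omegap R X \/ H = G_Dk_Omegap R X) ->
     games_dual G H) /\
  (* (iv) *)
  ((I_wins_pre (G_Tk_CDp R X) <-> sigma_compact X) /\
   (sigma_compact X <->
      cof_eq_omega (nbhd_open (Ck_open R X) (CX0 R X))
                   (nbhd_open (Cp_open R X) (CX0 R X)))) /\
  (* (v) *)
  (forall G H,
     (G = G_NK_notGamma X \/ G = G_Nk0_notGammap R X) ->
     (H = G_NK_notOmega X \/ H = G_Nk0_notOmegap R X) ->
     equiv_for_One G H) /\
  (* (vi) *)
  equiv_for_Two (G_K_Omega X) (G_K_Gamma X).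
Proof.
have [x0 _] := hne.
have [eAB eAC] := games_equiv_NK_Nk0_Tk hX x0.
have [eA'B' eA'C'] := games_equiv_K_Omegak0_Dk hX.
have [dA1 _ dA3 _] := G_NK_notOmega_G_K_Omega_dual x0.
have [dAG1 _ dAG3 _] := G_NK_notGamma_G_K_Gamma_dual x0.
have [oneA1 oneA2] := G_NK_notOmega_notGamma_equiv_for_One X.
have [oneB1 oneB2] := G_Nk0_notOmegap_notGammap_equiv_for_One R X.
have [AB1 AB2 _ _] := (games_equivP _ _).1 eAB.
have [_ AC2 _ _] := (games_equivP _ _).1 eAC.
split; first by split=> //; exact: games_equiv_trans (games_equiv_sym eAB) eAC.
split; first by split=> //; exact: games_equiv_trans (games_equiv_sym eA'B') eA'C'.
split.
  move=> G H hG hH; apply: (games_dual_equiv (G_NK_notOmega_G_K_Omega_dual x0)).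
    by case: hG => [->|[->|->]] //; exact: games_equiv_refl.
  by case: hH => [->|[->|->]] //; exact: games_equiv_refl.
split.
  split; last exact: sigma_compact_cof_eq_omega hX x0.
  rewrite -AC2; split; first exact: I_wins_pre_sigma_compact hX.1.
  exact: sigma_compact_I_wins_pre x0.
split.
  move=> G H [] -> [] ->;
    by split; rewrite -?oneA1 -?oneA2 -?oneB1 -?oneB2 ?AB1 ?AB2.
by split; [rewrite -dA1 -dAG1 | rewrite -dA3 -dAG3].
Qed.
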